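(* Let $T>0$, $\epsilon>0$, $\delta\in(0,1)$, and let $\mathcal{R}$ consist of $M=\frac{12T}{n\epsilon^2}\ln\frac{2n}{\delta}$ independently generated random RR sets. Then with probability at least $1-\delta$ the following hold for every node $u\in V$: (1) if $I_u\ge T$, then $n\,\mathcal{F_R}(u)\ge T-\frac{\epsilon n}{2}$; (2) if $I_u<T-\epsilon n$, then $n\,\mathcal{F_R}(u)<T-\frac{\epsilon n}{2}$.
   Context: $G=\langle V,E,w\rangle$ is a network with $n=|V|$ under the Linear Threshold or Independent Cascade model (given by its live-edge distribution: LT — each node $v$ independently selects at most one incoming live edge, $(u,v)$ with probability $w_{uv}/W_v$ where $W_v=w_v+\sum_{u}w_{uv}$ includes a self-weight $w_v$; IC — each edge $(u,v)$ is live independently with probability $w_{uv}$). The influence spread $I(S)$ is the expected number of nodes reachable from $S$ via live edges, and $I_u=I(\{u\})$. A random RR set is the set of nodes that can reach a uniformly random node $v\in V$ via live edges in a freshly sampled live-edge graph. $\mathcal{F_R}(u)$ is the fraction of RR sets in $\mathcal{R}$ that contain $u$. *)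

From HB Require Import structures.
From mathcomp Require Import all_boot all_order all_algebra.
From mathcomp Require Import reals exp.

Set Implicit Arguments.
Unset Strict Implicit.
Unset Printing Implicit Defensive.

Import Order.TTheory GRing.Theory Num.Theory.
Local Open Scope ring_scope.

(* The network G = <V,E,w> is given by a
   weight function w : V -> V -> R (w u v = w_{uv}, and w u v = 0 for
   non-edges) and, for the LT model, self-weights ws : V -> R (ws v = w_v).
   A live-edge graph is a set of (directed) edges L : {set V * V}. *)

Inductive diff_model := IC | LT.

Definition reach (n : nat) (L : {set 'I_n * 'I_n}) (u x : 'I_n) : bool :=
  connect (fun a b => (a, b) \in L) u x.

Definition Wtot (R : numDomainType) (n : nat) (w : 'I_n -> 'I_n -> R)
  (ws : 'I_n -> R) (v : 'I_n) : R := ws v + \sum_(u : 'I_n) w u v.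

Definition valid_model (R : numDomainType) (n : nat) (m : diff_model)
  (w : 'I_n -> 'I_n -> R) (ws : 'I_n -> R) : Prop :=
  match m with
  | IC => forall u v, 0 <= w u v <= 1
  | LT => [/\ forall u v, 0 <= w u v, forall v, 0 <= ws v &
             forall v, 0 < Wtot w ws v]
  end.

(* probability of the live-edge graph L under the model:
   IC : each edge (u,v) live independently with probability w_{uv};
   LT : each node v independently selects at most one incoming live edge,
        (u,v) with probability w_{uv}/W_v, none with probability w_v/W_v. *)
Definition live_prob (R : numFieldType) (n : nat) (m : diff_model)
  (w : 'I_n -> 'I_n -> R) (ws : 'I_n -> R) (L : {set 'I_n * 'I_n}) : R :=
  match m with
  | IC => \prod_(e : 'I_n * 'I_n)
            (if e \in L then w e.1 e.2 else 1 - w e.1 e.2)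
  | LT => \prod_(v : 'I_n)
            (let inL := [set u | (u, v) \in L] in
             if #|inL| == 0%N then ws v / Wtot w ws v
             else if #|inL| == 1%N then (\sum_(u in inL) w u v) / Wtot w ws v
             else 0)
  end.

Definition influence (R : numFieldType) (n : nat) (m : diff_model)
  (w : 'I_n -> 'I_n -> R) (ws : 'I_n -> R) (S : {set 'I_n}) : R :=
  \sum_(L : {set 'I_n * 'I_n})
     live_prob m w ws L * #|[set x | [exists s in S, reach L s x]]|%:R.

Definition influence1 (R : numFieldType) (n : nat) (m : diff_model)
  (w : 'I_n -> 'I_n -> R) (ws : 'I_n -> R) (u : 'I_n) : R :=
  influence m w ws [set u].

(* A random RR set is generated from a sample (L, v): a live-edge graph L
   and a uniformly random target node v, independent of each other. *)
Definition rr_set (n : nat) (L : {set 'I_n * 'I_n}) (v : 'I_n) : {set 'I_n} :=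
  [set u | reach L u v].

Definition rr_prob (R : numFieldType) (n : nat) (m : diff_model)
  (w : 'I_n -> 'I_n -> R) (ws : 'I_n -> R)
  (s : {set 'I_n * 'I_n} * 'I_n) : R :=
  live_prob m w ws s.1 / n%:R.

(* A collection of M independently generated RR sets is an outcome
   om : {ffun 'I_M -> {set 'I_n * 'I_n} * 'I_n} with product probability. *)
Definition coll_prob (R : numFieldType) (n M : nat) (m : diff_model)
  (w : 'I_n -> 'I_n -> R) (ws : 'I_n -> R)
  (om : {ffun 'I_M -> {set 'I_n * 'I_n} * 'I_n}) : R :=
  \prod_(i : 'I_M) rr_prob m w ws (om i).

Definition rr_frac {R : numFieldType} (n M : nat)
  (om : {ffun 'I_M -> {set 'I_n * 'I_n} * 'I_n}) (u : 'I_n) : R :=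
  #|[set i : 'I_M | u \in rr_set (om i).1 (om i).2]|%:R / M%:R.

Definition coll_Pr (R : numFieldType) (n M : nat) (m : diff_model)
  (w : 'I_n -> 'I_n -> R) (ws : 'I_n -> R)
  (E : pred {ffun 'I_M -> {set 'I_n * 'I_n} * 'I_n}) : R :=
  \sum_(om | E om) coll_prob m w ws om.

(* Let p_u be the probability that a random RR set contains u; then I_u = n p_u
   and the number of RR sets containing u is binomial (M, p_u).  With c = T/n and
   x = eps n / T, node u can only be misjudged if p_u >= c and fewer than
   M c (1 - x/2) sets contain u, or p_u < c (1 - x) and at least M c (1 - x/2)
   sets contain u.  The exponential Markov inequality with parameter 2x/5 bounds
   each of these probabilities by exp (- M c x^2 / 12) <= delta / (2n), and a
   union bound over the n nodes leaves a failure probability of at most delta/2. *)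

From HB Require Import structures.
From mathcomp Require Import all_boot all_order all_algebra.
From mathcomp Require Import reals exp sequences ring lra.
Import Order.TTheory GRing.Theory Num.Theory.
Local Open Scope ring_scope.
Set Implicit Arguments.
Unset Strict Implicit.
Unset Printing Implicit Defensive.

Section LiveEdge.
Variables (R : realFieldType) (n : nat) (m : diff_model)
  (w : 'I_n -> 'I_n -> R) (ws : 'I_n -> R).
Hypothesis valid : valid_model m w ws.

Lemma live_prob_ge0 L : 0 <= live_prob m w ws L.
Proof.
move: valid; rewrite /live_prob; case: m => /= [w01 | [w_ge0 ws_ge0 W_gt0]].
  by apply: prodr_ge0 => e _; have /andP[? ?] := w01 e.1 e.2; case: ifP; lra.
apply: prodr_ge0 => v _; have W_ge0 := ltW (W_gt0 v).
case: ifP => _; first exact: divr_ge0.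
by case: ifP => _ //; apply: divr_ge0 => //; apply: sumr_ge0.
Qed.

Lemma sum_edge_sets (F : {set 'I_n * 'I_n} -> R) :
  \sum_L F L = \sum_(G : {ffun 'I_n -> {set 'I_n}}) F [set e | e.1 \in G e.2].
Proof.
pose in_nbrs (L : {set 'I_n * 'I_n}) := [ffun v => [set u | (u, v) \in L]].
rewrite (reindex (fun G : {ffun 'I_n -> {set 'I_n}} => [set e | e.1 \in G e.2])) //.
exists in_nbrs => [G _ | L _]; first by apply/ffunP => v; apply/setP => u; rewrite !ffunE !inE.
by apply/setP => -[u v]; rewrite !inE ffunE inE.
Qed.

Lemma LT_in_edge_sum1 (v : 'I_n) : Wtot w ws v != 0 ->
  \sum_(S : {set 'I_n})
    (if #|S| == 0%N then ws v / Wtot w ws v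
     else if #|S| == 1%N then (\sum_(u in S) w u v) / Wtot w ws v else 0) = 1.
Proof.
move=> W_neq0.
rewrite (bigID (fun S : {set 'I_n} => #|S| == 0%N)) /=.
rewrite (eq_bigl (pred1 set0)); last by move=> S; rewrite /= cards_eq0.
rewrite big_pred1_eq cards0 eqxx (bigID (fun S : {set 'I_n} => #|S| == 1%N)) /=.
rewrite [X in _ + (_ + X)]big1 => [|S /andP[/negbTE -> /negbTE ->] //].
rewrite (eq_bigl (fun S : {set 'I_n} => #|S| == 1%N)); last first.
  by move=> S; case: eqP => // ->.
rewrite big_cards1; under eq_bigr => u _ do rewrite cards1 /= big_set1.
by rewrite addr0 -mulr_suml -mulrDl divff.
Qed.

Lemma live_prob_sum1 : \sum_L live_prob m w ws L = 1.
Proof.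
move: valid; rewrite /live_prob; case: m => /= [_ | [_ _ W_gt0]].
  rewrite -(@bigA_distr _ _ _ _ _ _ (fun e : 'I_n * 'I_n => w e.1 e.2)
                                     (fun e => 1 - w e.1 e.2)).
  by apply: big1 => e _; rewrite /= addrC subrK.
pose g v (S : {set 'I_n}) :=
  if #|S| == 0%N then ws v / Wtot w ws v
  else if #|S| == 1%N then (\sum_(u in S) w u v) / Wtot w ws v else 0.
rewrite sum_edge_sets (eq_bigr (fun G : {ffun _ -> _} => \prod_v g v (G v))) => [|G _].
  by rewrite -bigA_distr_bigA; apply: big1 => v _; rewrite LT_in_edge_sum1 // gt_eqF.
apply: eq_bigr => v _.
by have -> : [set u | (u, v) \in [set e | e.1 \in G e.2]] = G v
  by apply/setP => u; rewrite !inE.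
Qed.

Lemma rr_prob_ge0 : (0 < n)%N -> forall s, 0 <= rr_prob m w ws s.
Proof. by move=> n_gt0 s; rewrite divr_ge0 ?live_prob_ge0 ?ler0n. Qed.

Lemma rr_prob_sum1 : (0 < n)%N -> \sum_s rr_prob m w ws s = 1.
Proof.
move=> n_gt0; rewrite -(pair_bigA _ (fun L v => live_prob m w ws L / n%:R)) /=.
rewrite -[RHS]live_prob_sum1; apply: eq_bigr => L _.
by rewrite sumr_const card_ord -[_ *+ n]mulr_natr divfK // pnatr_eq0 -lt0n.
Qed.

End LiveEdge.

Lemma influence1_rr (R : realFieldType) (n : nat) (m : diff_model)
  (w : 'I_n -> 'I_n -> R) (ws : 'I_n -> R) (u : 'I_n) : (0 < n)%N ->
  influence1 m w ws u =
  n%:R * \sum_(s | u \in rr_set s.1 s.2) rr_prob m w ws s.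
Proof.
move=> n_gt0; have n_neq0 : n%:R != 0 :> R by rewrite pnatr_eq0 -lt0n.
rewrite /influence1 /influence /rr_prob [in RHS]big_mkcond /=.
rewrite -(pair_bigA _ (fun L v =>
  if u \in rr_set L v then live_prob m w ws L / n%:R else 0)) /= mulr_sumr.
apply: eq_bigr => L _.
have -> : [set x | [exists s in [set u], reach L s x]] = [set x | reach L u x].
  apply/setP => x; rewrite !inE.
  by apply/existsP/idP => [[s /andP[/set1P -> //]] | ux]; exists u; rewrite inE eqxx.
rewrite -sum1_card natr_sum big_mkcond /= !mulr_sumr; apply: eq_bigr => v _.
rewrite /rr_set !inE; case: (reach L u v); last by rewrite !mulr0.
by rewrite mulr1 mulrC divfK.
Qed.

Lemma ler_sum_subpred (R : numDomainType) (T : finType) (Q : T -> R)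
    (P P' : pred T) : (forall t, 0 <= Q t) -> subpred P P' ->
  \sum_(t | P t) Q t <= \sum_(t | P' t) Q t.
Proof.
move=> Q_ge0 PP'; rewrite [leRHS]big_mkcond [leLHS]big_mkcond /=.
by apply: ler_sum => t _; case: ifP => [/PP' -> // | _]; case: ifP.
Qed.

Lemma ler_sum_exists (R : numDomainType) (T I : finType) (Q : T -> R)
    (B : I -> pred T) : (forall t, 0 <= Q t) ->
  \sum_(t | [exists i, B i t]) Q t <= \sum_i \sum_(t | B i t) Q t.
Proof.
move=> Q_ge0; under [leRHS]eq_bigr => i _ do rewrite big_mkcond.
rewrite exchange_big /= big_mkcond; apply: ler_sum => t _.
case: ifP => [/existsP[i Bit] | _]; last by apply: sumr_ge0 => i _; case: ifP.
rewrite (bigD1 i) //= Bit lerDl.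
by apply: sumr_ge0 => j _; case: ifP.
Qed.

Lemma exp_markov (R : realType) (T : finType) (Q f : T -> R) (l k : R) :
  (forall t, 0 <= Q t) -> 0 <= l ->
  \sum_(t | k <= f t) Q t <= expR (- (l * k)) * \sum_t Q t * expR (l * f t).
Proof.
move=> Q_ge0 l_ge0; rewrite mulr_sumr big_mkcond /=; apply: ler_sum => t _.
rewrite mulrCA -expRD; have eQ_ge0 := mulr_ge0 (Q_ge0 t) (expR_ge0 (- (l * k) + l * f t)).
case: ifP => // k_le; rewrite ler_peMr // -expR0 ler_expR.
by rewrite addrC subr_ge0 ler_wpM2l.
Qed.

Lemma expR_mul1B_le1 (R : realType) (x : R) : expR x * (1 - x) <= 1.
Proof.
have [x_le1|x_gt1] := lerP x 1; last first.
  by rewrite -subr_lt0 in x_gt1; rewrite (le_trans _ ler01) // pmulr_rle0 ?expR_gt0 // ltW.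
have expRK : expR x * expR (- x) = 1 by rewrite -expRD subrr expR0.
rewrite -[leRHS]expRK.
by apply: ler_wpM2l; [exact: expR_ge0 | exact: expR_ge1Dx].
Qed.

Lemma expR_mul1Bquarter_le1 (R : realType) (y : R) : y <= 4 ->
  expR y * (1 - y / 4) ^+ 4 <= 1.
Proof.
move=> y_le4; have -> : expR y = expR (y / 4) ^+ 4 by rewrite -expRM_natl; congr expR; lra.
rewrite -exprMn -[leRHS](expr1n _ 4) lerXn2r ?nnegrE ?expR_mul1B_le1 //.
by rewrite mulr_ge0 ?expR_ge0 // subr_ge0; lra.
Qed.

Section ChernoffExponents.
Variable R : realType.

Lemma chernoff_upper_exponent (c x p : R) : 0 <= c -> 0 < x <= 1 ->
  0 <= p <= c * (1 - x) ->
  p * (expR (2/5 * x) - 1) - 2/5 * x * (c * (1 - x/2)) <= - (c * x^+2 / 12).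
Proof.
move=> c_ge0 /andP[x_gt0 x_le1] /andP[p_ge0 p_le].
(* e^(2x/5) <= (1 - x/10)^-4 reduces the claim to a polynomial inequality in x. *)
set V := expR (2/5 * x); set Y := (1 - x/10) ^+ 4.
have VY : V * Y <= 1.
  have := @expR_mul1Bquarter_le1 R (2/5 * x); rewrite /Y.
  have -> : 1 - 2/5 * x / 4 = 1 - x/10 by field.
  by apply; lra.
have Y_gt0 : 0 < Y by rewrite exprn_gt0 //; lra.
have V_ge1 : 1 <= V by rewrite /V (le_trans _ (expR_ge1Dx _)) //; lra.
have poly : (1 - x) * (1 - Y) <= Y * (2/5 * x * (1 - x/2) - x^+2/12).
  rewrite /Y; nra.
have key : (1 - x) * (V - 1) <= 2/5 * x * (1 - x/2) - x^+2/12 by nra.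
have : p * (V - 1) <= c * (1 - x) * (V - 1) by rewrite ler_wpM2r // subr_ge0.
nra.
Qed.

Lemma chernoff_lower_exponent (c x p : R) : 0 <= c -> 0 < x <= 2 -> c <= p ->
  p * (expR (- (2/5 * x)) - 1) + 2/5 * x * (c * (1 - x/2)) <= - (c * x^+2 / 12).
Proof.
move=> c_ge0 /andP[x_gt0 x_le2] c_le_p.
set V := expR (- (2/5 * x)); set Z := (1 + x/10) ^+ 4.
have VZ : V * Z <= 1.
  have := @expR_mul1Bquarter_le1 R (- (2/5 * x)); rewrite /Z.
  have -> : 1 - - (2/5 * x) / 4 = 1 + x/10 by field.
  by apply; lra.
have V_le1 : V <= 1 by rewrite /V -[leRHS]expR0 ler_expR; lra.
have poly : Z * (2/5 * x * (1 - x/2) + x^+2/12) <= Z - 1.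
  rewrite /Z; nra.
have key : V - 1 + 2/5 * x * (1 - x/2) + x^+2/12 <= 0.
  have Z_ge1 : 1 <= Z by rewrite /Z exprn_ege1 //; lra.
  nra.
have : p * (V - 1) <= c * (V - 1) by rewrite ler_wnM2r // subr_le0.
nra.
Qed.

End ChernoffExponents.

Section Sampling.
Variables (R : realType) (S : finType) (q : S -> R) (M : nat).
Hypotheses (q_ge0 : forall s, 0 <= q s) (q_sum1 : \sum_s q s = 1).

Definition prob (A : pred S) := \sum_(s | A s) q s.

Definition sample_prob (om : {ffun 'I_M -> S}) := \prod_i q (om i).

Definition hits (A : pred S) (om : {ffun 'I_M -> S}) : nat := #|[set i | A (om i)]|.

Lemma prob_ge0 A : 0 <= prob A.
Proof. exact: sumr_ge0. Qed.

Lemma prob_le1 A : prob A <= 1.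
Proof. by rewrite -q_sum1 (bigID A) /= lerDl sumr_ge0. Qed.

Lemma sample_prob_ge0 om : 0 <= sample_prob om.
Proof. exact: prodr_ge0. Qed.

Lemma hits_mgf A l : \sum_om sample_prob om * expR (l * (hits A om)%:R) =
  (1 + prob A * (expR l - 1)) ^+ M.
Proof.
have hitsE om : (hits A om)%:R = \sum_i (A (om i))%:R :> R.
  rewrite /hits -sum1_card natr_sum big_mkcond /=; apply: eq_bigr => i _.
  by rewrite inE; case: (A (om i)).
under eq_bigr => om _ do rewrite hitsE mulr_sumr expR_sum -big_split /=.
rewrite -(bigA_distr_bigA (fun (i : 'I_M) s => q s * expR (l * (A s)%:R))).
rewrite prodr_const card_ord; congr (_ ^+ _).
have qAC : \sum_(s | ~~ A s) q s = 1 - prob A.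
  by rewrite /prob -q_sum1 [in RHS](bigID A) /= addrAC subrr add0r.
rewrite (bigID A) /=.
under eq_bigr => s -> do rewrite mulr1.
under [X in _ + X]eq_bigr => s /negbTE -> do rewrite mulr0 expR0 mulr1.
by rewrite -mulr_suml qAC /prob; ring.
Qed.

Lemma sample_prob_sum1 : \sum_om sample_prob om = 1.
Proof.
have := hits_mgf predT 0; rewrite expR0 subrr mulr0 addr0 expr1n => <-.
by apply: eq_bigr => om _; rewrite mul0r expR0 mulr1.
Qed.

Lemma hits_mgf_le A l : \sum_om sample_prob om * expR (l * (hits A om)%:R) <=
  expR (M%:R * (prob A * (expR l - 1))).
Proof.
rewrite hits_mgf expRM_natl lerXn2r ?nnegrE ?expR_ge0 ?expR_ge1Dx //.
have := prob_ge0 A; have := prob_le1 A; have := expR_gt0 l; nra.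
Qed.

Lemma hits_upper_tail A (c x L : R) : 0 <= c -> 0 < x <= 1 ->
  prob A <= c * (1 - x) -> L <= M%:R * (c * x^+2 / 12) ->
  \sum_(om | M%:R * (c * (1 - x/2)) <= (hits A om)%:R) sample_prob om <= expR (- L).
Proof.
move=> c_ge0 x01 pA_le hL; have l_ge0 : 0 <= 2/5 * x by case/andP: x01; lra.
apply: le_trans (exp_markov _ _ sample_prob_ge0 l_ge0) _.
apply: le_trans (ler_wpM2l (expR_ge0 _) (hits_mgf_le A _)) _.
rewrite -expRD ler_expR.
have := chernoff_upper_exponent c_ge0 x01 (introT andP (conj (prob_ge0 A) pA_le)).
have : 0 <= M%:R :> R by []; nra.
Qed.

Lemma hits_lower_tail A (c x L : R) : 0 <= c -> 0 < x <= 2 ->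
  c <= prob A -> L <= M%:R * (c * x^+2 / 12) ->
  \sum_(om | (hits A om)%:R < M%:R * (c * (1 - x/2))) sample_prob om <= expR (- L).
Proof.
move=> c_ge0 x02 pA_ge hL; have l_ge0 : 0 <= 2/5 * x by case/andP: x02; lra.
apply: le_trans (ler_sum_subpred
  (P' := fun om => - (M%:R * (c * (1 - x/2))) <= - (hits A om)%:R) sample_prob_ge0 _) _.
  by move=> om /ltW; rewrite lerN2.
apply: le_trans (exp_markov _ _ sample_prob_ge0 l_ge0) _.
under eq_bigr => om _ do rewrite mulrN -mulNr.
apply: le_trans (ler_wpM2l (expR_ge0 _) (hits_mgf_le A _)) _.
rewrite -expRD ler_expR.
have := chernoff_lower_exponent c_ge0 x02 pA_ge.
have : 0 <= M%:R :> R by []; nra.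
Qed.

Definition well_classified (c x : R) (A : pred S) (om : {ffun 'I_M -> S}) :=
  ((c <= prob A) ==> (M%:R * (c * (1 - x/2)) <= (hits A om)%:R)) &&
  ((prob A < c * (1 - x)) ==> ((hits A om)%:R < M%:R * (c * (1 - x/2)))).

Lemma misclassified_prob_le A (c x L : R) : 0 < c -> 0 < x ->
  L <= M%:R * (c * x^+2 / 12) ->
  \sum_(om | ~~ well_classified c x A om) sample_prob om <= expR (- L).
Proof.
move=> c_gt0 x_gt0 hL; have c_ge0 := ltW c_gt0; have cx_gt0 := mulr_gt0 c_gt0 x_gt0.
have hits_ge0 om : 0 <= (hits A om)%:R :> R by [].
have always_well : (forall om, well_classified c x A om) ->
  \sum_(om | ~~ well_classified c x A om) sample_prob om <= expR (- L).
  by move=> wc; rewrite big_pred0 ?expR_ge0 // => om; rewrite wc.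
have [c_le_pA | pA_lt_c] := lerP c (prob A).
  have pA_big : (prob A < c * (1 - x)) = false by apply/negbTE; rewrite -leNgt; nra.
  have [x_le2 | x_gt2] := lerP x 2.
    apply: le_trans (hits_lower_tail c_ge0 _ c_le_pA hL); last by rewrite x_gt0.
    apply: ler_sum_subpred sample_prob_ge0 _ => om.
    by rewrite /well_classified c_le_pA pA_big andbT /= ltNge.
  apply: always_well => om.
  rewrite /well_classified c_le_pA pA_big andbT (le_trans _ (hits_ge0 om)) //.
  by apply: mulr_ge0_le0 => //; nra.
have c_gt_pA : (c <= prob A) = false by rewrite leNgt pA_lt_c.
have [pA_small | pA_mid] := boolP (prob A < c * (1 - x)).
  have x_lt1 : x < 1 by have := prob_ge0 A; nra.
  apply: le_trans (hits_upper_tail c_ge0 _ (ltW pA_small) hL); last by rewrite x_gt0 ltW.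
  apply: ler_sum_subpred sample_prob_ge0 _ => om.
  by rewrite /well_classified c_gt_pA pA_small /= -leNgt.
by apply: always_well => om; rewrite /well_classified c_gt_pA (negbTE pA_mid).
Qed.

End Sampling.

Lemma rescale_thresholds (R : realFieldType) (N K c x p k : R) : 0 < N -> 0 < K ->
  ((c * N <= N * p) ==> (c * N - x * c * N / 2 <= N * (k / K))) &&
  ((N * p < c * N - x * c * N) ==> (N * (k / K) < c * N - x * c * N / 2)) =
  ((c <= p) ==> (K * (c * (1 - x/2)) <= k)) &&
  ((p < c * (1 - x)) ==> (k < K * (c * (1 - x/2)))).
Proof.
move=> N_gt0 K_gt0.
have -> : c * N - x * c * N / 2 = N * (c * (1 - x/2)) by ring.
have -> : c * N - x * c * N = N * (c * (1 - x)) by ring.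
by rewrite [c * N]mulrC !ler_pM2l // !ltr_pM2l // ler_pdivlMr // ltr_pdivrMr // ![_ * K]mulrC.
Qed.

Theorem theorem5p3 (R : realType) (n : nat) (m : diff_model)
  (w : 'I_n -> 'I_n -> R) (ws : 'I_n -> R) (T eps delta : R) (M : nat) :
  (0 < n)%N ->
  valid_model m w ws ->
  0 < T -> 0 < eps -> 0 < delta -> delta < 1 ->
  12 * T / (n%:R * eps ^+ 2) * ln (2 * n%:R / delta) <= M%:R ->
  1 - delta <=
  coll_Pr m w ws
    (fun om : {ffun 'I_M -> {set 'I_n * 'I_n} * 'I_n} =>
       [forall u : 'I_n,
          ((T <= influence1 m w ws u) ==>
             (T - eps * n%:R / 2 <= n%:R * rr_frac om u))
          && ((influence1 m w ws u < T - eps * n%:R) ==>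
             (n%:R * rr_frac om u < T - eps * n%:R / 2))]).
Proof.
move=> n_gt0 valid T_gt0 eps_gt0 delta_gt0 delta_lt1 hM.
have N_gt0 : 0 < n%:R :> R by rewrite ltr0n.
pose q := rr_prob m w ws; pose A (u : 'I_n) s := u \in rr_set s.1 s.2.
have q_ge0 := rr_prob_ge0 valid n_gt0; have q_sum1 := rr_prob_sum1 valid n_gt0.
have [c c_gt0 eT] : exists2 c, 0 < c & T = c * n%:R.
  by exists (T / n%:R); rewrite ?divr_gt0 ?divfK ?gt_eqF.
have [x x_gt0 eeps] : exists2 x, 0 < x & eps = x * c.
  by exists (eps / c); rewrite ?divr_gt0 ?divfK ?gt_eqF.
subst T eps; set L := ln (2 * n%:R / delta) in hM.
have L_gt0 : 0 < L.
  by rewrite ln_gt0 // ltr_pdivlMr // mul1r; have := ler1n R n; rewrite n_gt0; lra.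
have k_gt0 : 0 < c * x^+2 / 12 by rewrite divr_gt0 ?mulr_gt0 ?exprn_gt0.
have hL : L <= M%:R * (c * x^+2 / 12).
  have coefE : 12 * (c * n%:R) / (n%:R * (x * c) ^+ 2) = (c * x^+2 / 12)^-1.
    by field; rewrite !gt_eqF.
  by rewrite coefE mulrC ler_pdivrMr in hM.
have M_gt0 : 0 < M%:R :> R by rewrite -(pmulr_lgt0 _ k_gt0) (lt_le_trans L_gt0).
have expL : expR (- L) = delta / (2 * n%:R).
  by rewrite expRN lnK ?invf_div // posrE divr_gt0 // mulr_gt0.
pose good (om : {ffun 'I_M -> {set 'I_n * 'I_n} * 'I_n}) :=
  [forall u, well_classified q c x (A u) om].
rewrite /coll_Pr (eq_bigl good) => [|om]; last first.
  by apply: eq_forallb => u; rewrite influence1_rr // rescale_thresholds.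
change (1 - delta <= \sum_(om | good om) sample_prob q om).
have bad : \sum_(om | ~~ good om) sample_prob q om <= delta / 2.
  rewrite (eq_bigl _ _ (fun om => negb_forall _)).
  apply: le_trans (ler_sum_exists _ (sample_prob_ge0 q_ge0)) _.
  apply: le_trans (ler_sum _ (fun u _ =>
    misclassified_prob_le q_ge0 q_sum1 (A u) c_gt0 x_gt0 hL)) _.
  rewrite sumr_const card_ord expL [leLHS](_ : _ = delta / 2) //.
  by rewrite -[_ *+ n]mulr_natr; field; rewrite gt_eqF.
have := sample_prob_sum1 M q_sum1; rewrite (bigID good) /=; lra.
Qed.
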